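(* Assume the univalence axiom. Let $A\xrightarrow{i}E\xrightarrow{p}B$ be a short exact sequence of abelian groups, $G$ an abelian group, and $G\to F\to E$ a short exact sequence. Suppose given path data $i^*(F)=\mathrm{pt}$, i.e. an isomorphism $\psi: G\oplus A\cong i^*(F)$ between the middle groups respecting the inclusions of $G$ and the projections to $A$. Let $F/A$ denote the cokernel of the composite $A\to G\oplus A\xrightarrow{\psi} i^*(F)\to F$. Then the composite $G\to F\to F/A$ and the map $F/A\to B$ induced (by the universal property of the cokernel) from $F\to E\xrightarrow{p}B$ form a short exact sequence $G\to F/A\to B$.
   Context: Short exact sequence $X\xrightarrow{j}M\xrightarrow{q}Y$: $j$ injective, $q$ surjective, $q\circ j=0$, and $X\to\ker q$ surjective. For $g:Y'\to Y$, the pullback $g^*(M)$ is the short exact sequence $X\to M\times_Y Y'\to Y'$ with middle group $\{(m,y')\mid q(m)=g(y')\}$; in particular $i^*(F)$ is the sequence $G\to F\times_E A\to A$. The trivial sequence $\mathrm{pt}$ from $G$ to $A$ is $G\to G\oplus A\to A$. *)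

From HB Require Import structures.
From mathcomp Require Import all_boot all_order all_algebra.
Set Implicit Arguments. Unset Strict Implicit. Unset Printing Implicit Defensive.
Import GRing.Theory.
Local Open Scope ring_scope.

Definition ses (X M Y : zmodType) (j : {additive X -> M}) (q : {additive M -> Y}) : Prop :=
  [/\ injective j,
      (forall y : Y, exists m : M, q m = y),
      (forall x : X, q (j x) = 0)
    & (forall m : M, q m = 0 -> exists x : X, j x = m)].

(* The pullback i^*(F) of G -jF-> F -qF-> E along i : A -> E has middle group
   F x_E A = {(f,a) | qF f = i a}, viewed as a subgroup of F * A. *)
Definition in_pullback (A E F : zmodType) (qF : F -> E) (i : A -> E) (x : F * A) : Prop :=
  qF x.1 = i x.2.

(* Path data i^*(F) = pt: an additive psi : G (+) A -> F * A which is an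
   isomorphism onto the pullback subgroup F x_E A, respecting the inclusions
   of G (g |-> (g,0) resp. g |-> (jF g, 0)) and the projections to A. *)
Definition pullback_trivialization (G A E F : zmodType)
    (i : {additive A -> E}) (jF : {additive G -> F}) (qF : {additive F -> E})
    (psi : {additive (G * A)%type -> (F * A)%type}) : Prop :=
  [/\ (forall ga, in_pullback qF i (psi ga)),
      injective psi,
      (forall x, in_pullback qF i x -> exists ga, psi ga = x),
      (forall g : G, psi (g, 0) = (jF g, 0))
    & (forall ga, (psi ga).2 = ga.2)].

Definition is_cokernel (A F C : zmodType) (s : A -> F) (c : {additive F -> C}) : Prop :=
  (forall z : C, exists x : F, c x = z) /\
  (forall x : F, c x = 0 <-> exists a : A, s a = x).

From HB Require Import structures.
From mathcomp Require Import all_boot all_order all_algebra.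
Set Implicit Arguments. Unset Strict Implicit. Unset Printing Implicit Defensive.
Import GRing.Theory.
Local Open Scope ring_scope.

(* The trivialization psi splits F over the image of A: writing
   s a := (psi (0, a)).1, every f with qF f = i a is jF g + s a for some g,
   and qF (s a) = i a.  Hence the kernel of F -> F/A is s(A), which meets
   jF(G) only in 0 (apply qF and use that i is injective), so G -> F/A is
   injective; and any f mapping to ker p has qF f = i a, so modulo s(A) it
   lies in jF(G). *)

Section TrivializedPullback.

Variables (G A E F : zmodType).
Variables (i : {additive A -> E}) (jF : {additive G -> F}).
Variables (qF : {additive F -> E}) (psi : {additive (G * A)%type -> (F * A)%type}).
Hypothesis psi_triv : pullback_trivialization i jF qF psi.

Definition trivialization_lift (a : A) : F := (psi (0, a)).1.

Local Notation s := trivialization_lift.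

Lemma qF_trivialization_lift a : qF (s a) = i a.
Proof.
have [in_pb _ _ _ psi2] := psi_triv.
by have := in_pb (0, a); rewrite /in_pullback psi2.
Qed.

Lemma trivialization_pair g a : psi (g, a) = (jF g + s a, a).
Proof.
have [_ _ _ psi_g psi2] := psi_triv.
have -> : (g, a) = (g, 0) + (0, a).
  by apply: injective_projections; rewrite /= ?addr0 ?add0r.
by rewrite raddfD psi_g; congr pair; rewrite /= ?add0r psi2.
Qed.

Lemma pullback_decomposition f a :
  qF f = i a -> exists g, f = jF g + s a.
Proof.
have [_ _ psi_onto _ psi2] := psi_triv.
move=> qFf; have [[g a'] psi_ga] := psi_onto (f, a) qFf; exists g.
have ea : a' = a by have := psi2 (g, a'); rewrite psi_ga.
by move: psi_ga; rewrite ea trivialization_pair => -[].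
Qed.

Lemma jF_eq_trivialization_lift g a :
  injective i -> ses jF qF -> jF g = s a -> g = 0.
Proof.
move=> i_inj [jF_inj _ qF_jF _] jF_s.
have a0 : a = 0.
  by apply: i_inj; rewrite -qF_trivialization_lift -jF_s qF_jF raddf0.
apply: jF_inj; rewrite jF_s a0 raddf0 /trivialization_lift.
by rewrite (_ : ((0 : G), (0 : A)) = 0) // raddf0.
Qed.

End TrivializedPullback.

Theorem lemma14 (A E B G F C : zmodType)
    (i : {additive A -> E}) (p : {additive E -> B})
    (jF : {additive G -> F}) (qF : {additive F -> E})
    (psi : {additive (G * A)%type -> (F * A)%type})
    (c : {additive F -> C}) (r : {additive C -> B}) :
  ses i p ->
  ses jF qF ->
  pullback_trivialization i jF qF psi ->
  is_cokernel (fun a : A => (psi (0, a)).1) c ->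
  (forall x : F, r (c x) = p (qF x)) ->
  exists (cj : {additive G -> C}),
    (forall g : G, cj g = c (jF g)) /\ ses cj r.
Proof.
move=> ses_p ses_qF psi_triv [c_onto c_ker] r_c.
have ker_c x : c x = 0 <-> exists a, trivialization_lift psi a = x := c_ker x.
have [i_inj p_onto _ p_ker] := ses_p; have [_ qF_onto qF_jF _] := ses_qF.
exists (c \o jF)%FUN; split => //; split => /=.
- apply: raddf_inj => g /ker_c [a].
  by move/esym/(jF_eq_trivialization_lift psi_triv i_inj ses_qF).
- move=> b; have [e <-] := p_onto b; have [f <-] := qF_onto e.
  by exists (c f); rewrite r_c.
- by move=> g; rewrite r_c qF_jF raddf0.
- move=> z; have [f <-] := c_onto z; rewrite r_c => /p_ker [a /esym qFf].
  have [g ->] := pullback_decomposition psi_triv qFf.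
  have s0 : c (trivialization_lift psi a) = 0 by apply/ker_c; exists a.
  by exists g; rewrite raddfD s0 addr0.
Qed.
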